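(* Let $R=\mathbb{R}[t_1,\dots,t_n]$, let $k\ge 0$, and let $R_{\le k}\subset R$ be the $\mathbb{R}$-vector space of polynomials of total degree $\le k$. For every $\mathbb{R}$-linear map $A:R_{\le k}\to R$ there exists a differential operator $D\in\mathrm{Diff}^k(R)$ whose restriction $D|_{R_{\le k}}:R_{\le k}\to R$ equals $A$.
   Context: For a commutative algebra $R$ over a field $\Bbbk$, for $a\in R$ let $m_a:R\to R$, $b\mapsto ab$. The differential operators of order $0$ are the $R$-module endomorphisms of $R$, i.e. $\mathrm{Diff}^0(R)=\{m_a: a\in R\}$. Inductively, for $i\ge 1$, a $\Bbbk$-linear map $D:R\to R$ is a differential operator of order $i$, written $D\in\mathrm{Diff}^i(R)$, if for every $D^0\in \mathrm{Diff}^0(R)$ the commutator $[D,D^0]=D\circ D^0-D^0\circ D$ lies in $\mathrm{Diff}^{i-1}(R)$. Here $R=\mathbb{R}[t_1,\dots,t_n]$ is regarded as an $\mathbb{R}$-algebra. *)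

From HB Require Import structures.
From mathcomp Require Import all_boot all_algebra.
From mathcomp Require Import reals.
From mathcomp Require Import mpoly.
Set Implicit Arguments. Unset Strict Implicit. Unset Printing Implicit Defensive.
Import GRing.Theory.
Local Open Scope ring_scope.

Fixpoint isDiffOp (K : fieldType) (n : nat) (i : nat)
    (D : {mpoly K[n]} -> {mpoly K[n]}) : Prop :=
  match i with
  | 0 => exists a : {mpoly K[n]}, forall p, D p = a * p
  | i'.+1 =>
      (forall (c : K) (p q : {mpoly K[n]}), D (c *: p + q) = c *: D p + D q) /\
      forall a : {mpoly K[n]}, isDiffOp i' (fun p => D (a * p) - a * D p)
  end.

From mathcomp Require Import all_boot all_algebra.
From mathcomp Require Import reals.
From mathcomp Require Import mpoly.
Local Open Scope ring_scope.
Import GRing.Theory Num.Theory.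
Set Implicit Arguments. Unset Strict Implicit. Unset Printing Implicit Defensive.

(** Operators of order [j] are closed under sums and left multiplication by
    polynomials, and composing with a partial derivative raises the order by
    one; hence [sum_m c_m * d^m] with [|m| <= k] has order [k].  We build [D]
    by induction on [k]: if [D'] of order [k] agrees with [A] in degree [< k],
    add [sum_(|m| = k) (A X^m - D' X^m) / m! * d^m].  The operator [d^m] with
    [|m| = k] kills every monomial of degree [< k] and every monomial of
    degree [k] other than [X^m], while [d^m X^m = m!], which is invertible in
    characteristic 0. *)

Section DifferentialOperators.
Variables (K : fieldType) (n : nat).
Implicit Types (D : {mpoly K[n]} -> {mpoly K[n]}) (p q : {mpoly K[n]}).

Lemma isDiffOp_linear j D : isDiffOp j D ->
  forall c p q, D (c *: p + q) = c *: D p + D q.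
Proof.
case: j => [|j] /=; last by case.
by case=> a Da c p q; rewrite !Da mulrDr scalerAr.
Qed.

Lemma eq_isDiffOp j D D' : D =1 D' -> isDiffOp j D -> isDiffOp j D'.
Proof.
elim: j D D' => [|j IHj] D D' eqD /=.
  by case=> a Da; exists a => p; rewrite -eqD.
case=> linD commD; split; first by move=> c p q; rewrite -!eqD.
by move=> a; apply: IHj (commD a) => p /=; rewrite !eqD.
Qed.

Lemma isDiffOpS j D : isDiffOp j D -> isDiffOp j.+1 D.
Proof.
elim: j D => [|j IHj] D /=; last by case=> linD commD; split=> // a; apply: IHj.
move=> D0; split; first exact: (@isDiffOp_linear 0).
by case: D0 => a Da b; exists 0 => p; rewrite !Da mul0r mulrCA subrr.
Qed.

Lemma isDiffOp0 j : isDiffOp j (fun _ : {mpoly K[n]} => 0).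
Proof.
elim: j => [|j IHj] /=; first by exists 0 => p; rewrite mul0r.
split=> [c p q|a]; first by rewrite scaler0 addr0.
by apply: eq_isDiffOp IHj => p /=; rewrite mulr0 subr0.
Qed.

Lemma isDiffOpD j D1 D2 : isDiffOp j D1 -> isDiffOp j D2 ->
  isDiffOp j (fun p => D1 p + D2 p).
Proof.
elim: j D1 D2 => [|j IHj] D1 D2 /=.
  by case=> a Da [b Db]; exists (a + b) => p; rewrite Da Db mulrDl.
case=> lin1 comm1 [lin2 comm2]; split=> [c p q|a].
  by rewrite lin1 lin2 scalerDr addrACA.
apply: eq_isDiffOp (IHj _ _ (comm1 a) (comm2 a)) => p /=.
by rewrite mulrDr opprD addrACA.
Qed.

Lemma isDiffOp_mull j D b : isDiffOp j D -> isDiffOp j (fun p => b * D p).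
Proof.
elim: j D => [|j IHj] D /=.
  by case=> a Da; exists (b * a) => p; rewrite Da mulrA.
case=> linD commD; split=> [c p q|a]; first by rewrite linD mulrDr scalerAr.
by apply: eq_isDiffOp (IHj _ (commD a)) => p /=; rewrite mulrBr mulrCA.
Qed.

Lemma isDiffOp_sum j (T : Type) (r : seq T) (P : pred T)
    (F : T -> {mpoly K[n]} -> {mpoly K[n]}) :
  (forall x, P x -> isDiffOp j (F x)) ->
  isDiffOp j (fun p => \sum_(x <- r | P x) F x p).
Proof.
move=> opF; elim: r => [|x r IHr].
  by apply: eq_isDiffOp (isDiffOp0 j) => p; rewrite big_nil.
case Px: (P x).
  by apply: eq_isDiffOp (isDiffOpD (opF x Px) IHr) => p; rewrite big_cons Px.
by apply: eq_isDiffOp IHr => p; rewrite big_cons Px.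
Qed.

(** By the Leibniz rule, [[d_i o D, a] = d_i o [D, a] + (d_i a) * D]. *)
Lemma isDiffOp_mderiv j D i : isDiffOp j D ->
  isDiffOp j.+1 (fun p => mderiv i (D p)).
Proof.
elim: j D => [|j IHj] D /=.
  case=> c Dc; split=> [x p q|a].
    by rewrite !Dc mulrDr -scalerAr mderivD mderivZ.
  by exists (mderiv i a * c) => p; rewrite !Dc mulrCA (mderivM i a) addrK mulrA.
case=> linD commD; split=> [c p q|a]; first by rewrite linD mderivD mderivZ.
have opDa : isDiffOp j.+1 (fun p => mderiv i a * D p) by apply: isDiffOp_mull.
apply: eq_isDiffOp (isDiffOpD (IHj _ (commD a)) opDa) => p /=.
by rewrite mderivB mderivM opprD addrA addrAC addrNK.
Qed.

Lemma isDiffOp_foldr_mderiv (s : seq 'I_n) :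
  isDiffOp (size s) (foldr (@mderiv n K) ^~ s).
Proof.
elim: s => [|i s IHs] /=; first by exists 1 => p; rewrite mul1r.
exact: isDiffOp_mderiv.
Qed.

Lemma isDiffOp_mderivm m : isDiffOp (mdeg m) (@mderivm n K m).
Proof.
move: (@mderivm_foldr n K m) => /=; set s := flatten _ => foldr_s.
have -> : mdeg m = size s.
  rewrite size_flatten /shape -map_comp sumnE big_map mdegE.
  by rewrite /index_enum /= -enumT; apply: eq_bigr => i _; rewrite /= size_nseq.
by apply: eq_isDiffOp (isDiffOp_foldr_mderiv s) => p; rewrite foldr_s.
Qed.

End DifferentialOperators.

Section Extension.
Variables (K : fieldType) (n : nat).
Hypothesis K_char0 : [pchar K] =i pred0.
Implicit Types (F G : {mpoly K[n]} -> {mpoly K[n]}) (m : 'X_{1..n}).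

Definition linear_upto N F := forall (c : K) (p q : {mpoly K[n]}),
  (msize p <= N)%N -> (msize q <= N)%N -> F (c *: p + q) = c *: F p + F q.

Lemma linear_upto0 N F : linear_upto N F -> F 0 = 0.
Proof.
move=> linF; have := linF 1 0 0; rewrite msize0 !scale1r addr0 => /(_ isT isT).
by move/esym/(canRL (addrK _)); rewrite subrr.
Qed.

Lemma linear_upto_eqX N F G : linear_upto N F -> linear_upto N G ->
    (forall m, (mdeg m < N)%N -> F 'X_[m] = G 'X_[m]) ->
  forall p, (msize p <= N)%N -> F p = G p.
Proof.
move=> linF linG eqFG p size_p.
suff /(_ (msupp p)) IH r : all (fun m => mdeg m < N)%N r ->
    let q := \sum_(m <- r) p@_m *: 'X_[m] in (msize q <= N)%N /\ F q = G q.
  rewrite [p]mpolyE; case: IH => //.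
  by apply/allP => m /msize_mdeg_lt /leq_trans; apply.
elim: r => [|m r IHr] /=.
  by rewrite big_nil msize0 (linear_upto0 linF) (linear_upto0 linG).
case/andP=> deg_m /IHr [size_r eq_r]; rewrite big_cons.
have size_m : (msize ('X_[m] : {mpoly K[n]}) <= N)%N by rewrite msizeX.
split; last by rewrite linF // linG // eqFG // eq_r.
rewrite (leq_trans (msizeD_le _ _)) // geq_max size_r andbT.
exact: leq_trans (msizeZ_le _ _) size_m.
Qed.

Definition mfact m := (\prod_(i < n) (m i)`!)%N.

Lemma mfact_neq0 m : (mfact m)%:R != 0 :> K.
Proof.
rewrite (pcharf0P K).1 // -lt0n prodn_gt0 // => i; exact: fact_gt0.
Qed.

Lemma mderivmXX m : mderivm m 'X_[m] = (mfact m)%:R *: (1 : {mpoly K[n]}).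
Proof.
have subm_id : (m - m)%MM = 0%MM by apply/mnmP => i; rewrite mnmBE subnn mnm0E.
rewrite mderivmX subm_id mpolyX0; congr (_%:R *: _).
by apply: eq_bigr => i _; rewrite ffactnn.
Qed.

Lemma mderivmX_eq0 m m' : (mdeg m <= mdeg m')%N -> m' != m ->
  mderivm m' ('X_[m] : {mpoly K[n]}) = 0.
Proof.
move=> deg_le ne_m'm; rewrite mderivmX.
suff -> : (\prod_(i < n) (m i)^_(m' i))%N = 0%N by rewrite scale0r.
have [/existsP [i lt_i] | /existsPn le_m'm] := boolP [exists i, m i < m' i]%N.
  by rewrite (bigD1 i) //= ffact_small.
have le_m' : (m' <= m)%MM by apply/mnm_lepP => i; rewrite leqNgt le_m'm.
have def_m := submK le_m'.
have : mdeg (m - m') == 0%N.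
  by move: deg_le; rewrite -{1}def_m mdegD -{2}[mdeg m']add0n leq_add2r leqn0.
by rewrite mdeg_eq0 => /eqP dm; rewrite -def_m dm add0m eqxx in ne_m'm.
Qed.

Lemma isDiffOp_extendS k A D' : linear_upto k.+1 A -> isDiffOp k D' ->
    (forall p, (msize p <= k)%N -> D' p = A p) ->
  exists D, isDiffOp k D /\ forall p, (msize p <= k.+1)%N -> D p = A p.
Proof.
move=> linA opD' eqD'A.
pose c m : {mpoly K[n]} := (mfact m)%:R^-1 *: (A 'X_[m] - D' 'X_[m]).
pose D p : {mpoly K[n]} :=
  D' p + \sum_(m : 'X_{1..n < k.+1} | mdeg m == k) c m * mderivm m p.
have opD : isDiffOp k D.
  apply: isDiffOpD opD' _; apply: isDiffOp_sum => m /eqP deg_m.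
  by apply: isDiffOp_mull; rewrite -[k in isDiffOp k]deg_m; apply: isDiffOp_mderivm.
exists D; split=> [//|]; apply: (linear_upto_eqX _ linA) => [a p q _ _|m deg_m].
  exact: (isDiffOp_linear opD a p q).
rewrite /D; have [deg_mk | deg_mk] := eqVneq (mdeg m) k.
  rewrite (bigD1 (BMultinom deg_m)); last by rewrite /= deg_mk.
  rewrite big1 => [|m' /andP [/eqP deg_m' ne_m'm]]; last first.
    by rewrite mderivmX_eq0 ?mulr0 // deg_m' deg_mk.
  rewrite /= addr0 mderivmXX -scalerAr mulr1 /c scalerA mulfV ?mfact_neq0 // scale1r.
  by rewrite addrC subrK.
rewrite big1 => [|m' /eqP deg_m']; last first.
  have le_mm' : (mdeg m <= mdeg m')%N by rewrite deg_m' -ltnS.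
  have ne_m'm : bmnm m' != m by apply: contra_neq deg_mk => <-.
  by rewrite mderivmX_eq0 ?mulr0.
have size_m : (msize ('X_[m] : {mpoly K[n]}) <= k)%N.
  by rewrite msizeX ltn_neqAle deg_mk -ltnS.
by rewrite addr0 eqD'A.
Qed.

Lemma isDiffOp_extension k A : linear_upto k.+1 A ->
  exists D, isDiffOp k D /\ forall p, (msize p <= k.+1)%N -> D p = A p.
Proof.
elim: k A => [|k IHk] A linA.
  apply: (isDiffOp_extendS linA (isDiffOp0 K n 0)) => p.
  by rewrite leqn0 msize_poly_eq0 => /eqP ->; rewrite (linear_upto0 linA).
have linA' : linear_upto k.+1 A by move=> c p q ? ?; apply: linA; apply: leqW.
have [D' [opD' eqD'A]] := IHk A linA'.
exact: isDiffOp_extendS linA (isDiffOpS opD') eqD'A.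
Qed.

End Extension.

Theorem mainTheorem2 (R : realType) (n k : nat)
    (A : {mpoly R[n]} -> {mpoly R[n]})
    (A_lin : forall (c : R) (p q : {mpoly R[n]}),
        (msize p <= k.+1)%N -> (msize q <= k.+1)%N ->
        A (c *: p + q) = c *: A p + A q) :
  exists D : {mpoly R[n]} -> {mpoly R[n]},
    isDiffOp k D /\ forall p : {mpoly R[n]}, (msize p <= k.+1)%N -> D p = A p.
Proof. exact: (@isDiffOp_extension R n (pchar_num R) k A A_lin). Qed.
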